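(* Assume $k_{+\infty}=k_{-\infty}=:k_\infty$ and $k^2(x)\le k_\infty^2$ for all $x$. Let $\chi=\sqrt{k_\infty^2-k^2}$, and suppose $\chi$ is continuous and piecewise continuously differentiable and there is $x_0$ such that $\chi$ is nondecreasing on $(-\infty,x_0]$ and nonincreasing on $[x_0,\infty)$ (a single-hump barrier). Then $$T\ \ge\ \mathrm{sech}^2\left\{\frac{\max_x\sqrt{k_\infty^2-k^2(x)}}{k_\infty}+\int_{-\infty}^{\infty}\sqrt{k_\infty^2-k^2}\;\mathrm{d}x\right\}.$$ In quantum-mechanical notation, with $k^2=2m(E-V)/\hbar^2$, $V\ge0$, $V\to0$ at $\pm\infty$, $E>0$ and $V$ single-humped with maximum $V_{\max}$, this reads $T\ge\mathrm{sech}^2\{\sqrt{V_{\max}/E}+\int_{-\infty}^{\infty}\sqrt{2mV}/\hbar\,\mathrm{d}x\}$.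
   Context: Standing setup: $k^2:\mathbb{R}\to\mathbb{R}$ is a piecewise continuous function with $k^2(x)\to k_{\pm\infty}^2$ as $x\to\pm\infty$, where $k_{\pm\infty}>0$ and $k^2-k_{\pm\infty}^2$ is integrable near $\pm\infty$. For the equation $u''+k^2(x)u=0$ there is a solution with $u(x)=e^{ik_{-\infty}x}+r\,e^{-ik_{-\infty}x}+o(1)$ as $x\to-\infty$ and $u(x)=\tau\,e^{ik_{+\infty}x}+o(1)$ as $x\to+\infty$; the transmission probability is $T=(k_{+\infty}/k_{-\infty})|\tau|^2$. Here $\mathrm{sech}=1/\cosh$, and if the integral equals $+\infty$ the bound is read as the trivial statement $T\ge 0$. *)

From Stdlib Require Import Reals Lra List.
Open Scope R_scope.

Definition sech (x : R) : R := 1 / cosh x.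

Definition locally_finite (D : R -> Prop) : Prop :=
  forall a b : R, exists l : list R, forall x, D x -> a <= x <= b -> In x l.

Definition has_right_limit (f : R -> R) (x : R) : Prop :=
  exists l : R, forall eps, 0 < eps -> exists delta, 0 < delta /\
    forall y, x < y < x + delta -> Rabs (f y - l) < eps.

Definition has_left_limit (f : R -> R) (x : R) : Prop :=
  exists l : R, forall eps, 0 < eps -> exists delta, 0 < delta /\
    forall y, x - delta < y < x -> Rabs (f y - l) < eps.

Definition piecewise_continuous (f : R -> R) : Prop :=
  exists D : R -> Prop, locally_finite D /\
    (forall x, ~ D x -> continuity_pt f x) /\
    (forall x, D x -> has_left_limit f x /\ has_right_limit f x).

Definition piecewise_C1 (f : R -> R) : Prop :=
  exists (D : R -> Prop) (f' : R -> R), locally_finite D /\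
    (forall x, ~ D x -> derivable_pt_lim f x (f' x) /\ continuity_pt f' x) /\
    (forall x, D x -> has_left_limit f' x /\ has_right_limit f' x).

Definition tends_to_pinf (f : R -> R) (l : R) : Prop :=
  forall eps, 0 < eps -> exists A, forall x, A <= x -> Rabs (f x - l) < eps.

Definition tends_to_minf (f : R -> R) (l : R) : Prop :=
  forall eps, 0 < eps -> exists A, forall x, x <= A -> Rabs (f x - l) < eps.

Definition integrable_near_pinf (f : R -> R) : Prop :=
  exists A : R,
    (forall b, A <= b -> inhabited (Riemann_integrable (fun x => Rabs (f x)) A b)) /\
    exists B : R, forall b (pr : Riemann_integrable (fun x => Rabs (f x)) A b),
      A <= b -> RiemannInt pr <= B.

Definition integrable_near_minf (f : R -> R) : Prop :=
  exists A : R,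
    (forall a, a <= A -> inhabited (Riemann_integrable (fun x => Rabs (f x)) a A)) /\
    exists B : R, forall a (pr : Riemann_integrable (fun x => Rabs (f x)) a A),
      a <= A -> RiemannInt pr <= B.

Definition improper_integral (f : R -> R) (I : R) : Prop :=
  (forall a b, a <= b -> inhabited (Riemann_integrable f a b)) /\
  forall eps, 0 < eps -> exists A, forall a b (pr : Riemann_integrable f a b),
    a <= - A -> A <= b -> Rabs (RiemannInt pr - I) < eps.

Definition is_solution (k2 : R -> R) (v : R -> R) : Prop :=
  exists v' : R -> R,
    (forall x, derivable_pt_lim v x (v' x)) /\
    continuity v' /\
    (forall x, continuity_pt k2 x -> derivable_pt_lim v' x (- k2 x * v x)).

(* transmission probability T = (k_{+inf}/k_{-inf}) |tau|^2, tau = tr + i ti *)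
Definition transmission (kp km tr ti : R) : R := kp / km * (tr ^ 2 + ti ^ 2).

(* Write [chi = sqrt (k^2 - k2) >= 0], [h = k + chi], and let [u = ur + i ui]
   be the scattering solution, [u' = vr + i vi].  Besides the constant
   Wronskian [W = Im (conj u u')] consider the energy
   [P = (|u'|^2 + h^2 |u|^2) / (2h) >= |W|] and the regularized functional
   [G = P + sqrt (P^2 - W^2 + eps)].  A Cauchy-Schwarz estimate gives
   [G' >= - (|h'|/h + 2 chi) G], so [G h exp(2 int chi)] increases where [chi]
   increases and [G exp(2 int chi) / h] increases where [chi] decreases.
   Chaining both pieces through the top [x0] of the hump yields
   [G a <= exp (2 (M/k + I)) G b] for [a <= x0 <= b].  At [+oo] and [-oo] the
   solution is a free wave, which determines the limits of [W] and [G] in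
   terms of [|tau|^2] and [|r|^2]; letting [a -> -oo], [b -> +oo], [eps -> 0]
   and using [|tau|^2 + |r|^2 = 1] gives [|tau|^2 >= sech^2 (M/k + I)]. *)

From Stdlib Require Import Reals Lra Psatz List ClassicalEpsilon FunctionalExtensionality.
Open Scope R_scope.

Notation D := derivable_pt_lim.

Lemma Rdiv_nonneg a b : 0 <= a -> 0 < b -> 0 <= a / b.
Proof. intros Ha Hb. apply Rmult_le_pos; [exact Ha | left; now apply Rinv_0_lt_compat]. Qed.

Lemma D_eq f x a b : D f x a -> a = b -> D f x b.
Proof. now intros H ->. Qed.

Lemma D_const c x : D (fun _ => c) x 0.
Proof. exact (derivable_pt_lim_const c x). Qed.

Lemma D_plus f g x a b : D f x a -> D g x b -> D (fun y => f y + g y) x (a + b).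
Proof. exact (derivable_pt_lim_plus f g x a b). Qed.

Lemma D_minus f g x a b : D f x a -> D g x b -> D (fun y => f y - g y) x (a - b).
Proof. exact (derivable_pt_lim_minus f g x a b). Qed.

Lemma D_mult f g x a b :
  D f x a -> D g x b -> D (fun y => f y * g y) x (a * g x + f x * b).
Proof. exact (derivable_pt_lim_mult f g x a b). Qed.

Lemma D_comp f g x a b : D f x a -> D g (f x) b -> D (fun y => g (f y)) x (b * a).
Proof. exact (derivable_pt_lim_comp f g x a b). Qed.

Lemma D_sq f x a : D f x a -> D (fun y => f y ^ 2) x (2 * f x * a).
Proof.
  intros H. eapply D_eq.
  - apply (derivable_pt_lim_ext (fun y => f y * f y)); [intro; ring | apply D_mult; exact H].
  - ring.
Qed.

Lemma D_inv f x a : D f x a -> f x <> 0 -> D (fun y => / f y) x (- a / f x ^ 2).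
Proof.
  intros H Hx. eapply D_eq.
  - apply (derivable_pt_lim_ext (div_fct (fun _ => 1) f)); [intro; unfold div_fct, Rdiv; ring|].
    exact (derivable_pt_lim_div _ f x 0 a (D_const 1 x) H Hx).
  - unfold Rsqr. field. exact Hx.
Qed.

Lemma D_sqrt f x a : D f x a -> 0 < f x -> D (fun y => sqrt (f y)) x (a / (2 * sqrt (f x))).
Proof.
  intros H Hx. eapply D_eq.
  - exact (D_comp f sqrt x a _ H (derivable_pt_lim_sqrt _ Hx)).
  - field. apply Rgt_not_eq, sqrt_lt_R0, Hx.
Qed.

Lemma D_exp f x a : D f x a -> D (fun y => exp (f y)) x (exp (f x) * a).
Proof. intros H. exact (D_comp f exp x a _ H (derivable_pt_lim_exp _)). Qed.

Lemma D_scal c x : D (fun y => c * y) x c.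
Proof.
  eapply D_eq; [exact (D_mult _ _ x _ _ (D_const c x) (derivable_pt_lim_id x)) |].
  cbv beta. unfold id. ring.
Qed.

Lemma D_cos c x : D (fun y => cos (c * y)) x (- c * sin (c * x)).
Proof.
  eapply D_eq; [exact (D_comp _ cos x c _ (D_scal c x) (derivable_pt_lim_cos _)) | ring].
Qed.

Lemma D_sin c x : D (fun y => sin (c * y)) x (c * cos (c * x)).
Proof.
  eapply D_eq; [exact (D_comp _ sin x c _ (D_scal c x) (derivable_pt_lim_sin _)) | ring].
Qed.

Lemma cont_ext f g x : (forall y, f y = g y) -> continuity_pt f x -> continuity_pt g x.
Proof. intros E H. replace g with f; [exact H | now apply functional_extensionality]. Qed.

Lemma cont_const c x : continuity_pt (fun _ => c) x.
Proof. apply continuity_pt_const. now intros a b. Qed.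

Lemma cont_plus f g x :
  continuity_pt f x -> continuity_pt g x -> continuity_pt (fun y => f y + g y) x.
Proof. exact (continuity_pt_plus f g x). Qed.

Lemma cont_minus f g x :
  continuity_pt f x -> continuity_pt g x -> continuity_pt (fun y => f y - g y) x.
Proof. exact (continuity_pt_minus f g x). Qed.

Lemma cont_mult f g x :
  continuity_pt f x -> continuity_pt g x -> continuity_pt (fun y => f y * g y) x.
Proof. exact (continuity_pt_mult f g x). Qed.

Lemma cont_sq f x : continuity_pt f x -> continuity_pt (fun y => f y ^ 2) x.
Proof. intros H. apply (cont_ext (fun y => f y * f y)); [intro; ring | now apply cont_mult]. Qed.

Lemma cont_inv f x : continuity_pt f x -> f x <> 0 -> continuity_pt (fun y => / f y) x.
Proof. exact (continuity_pt_inv f x). Qed.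

Lemma cont_sqrt f x : continuity_pt f x -> 0 <= f x -> continuity_pt (fun y => sqrt (f y)) x.
Proof. intros H Hx. apply (continuity_pt_comp f sqrt x H). now apply continuity_pt_sqrt. Qed.

Lemma cont_exp f x : continuity_pt f x -> continuity_pt (fun y => exp (f y)) x.
Proof.
  intros H. apply (continuity_pt_comp f exp x H).
  apply derivable_continuous_pt, derivable_pt_exp.
Qed.

Lemma cont_of_D f x l : D f x l -> continuity_pt f x.
Proof. intros H. apply derivable_continuous_pt. now exists l. Qed.

(** * Behaviour at [+oo] ([s = true]) and at [-oo] ([s = false]) *)

Definition beyond (s : bool) (A x : R) : Prop := if s then A <= x else x <= A.

Definition tends (s : bool) (f : R -> R) (l : R) : Prop :=
  forall eps, 0 < eps -> exists A, forall x, beyond s A x -> Rabs (f x - l) < eps.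

Definition asymp (s : bool) (f F : R -> R) : Prop := tends s (fun x => f x - F x) 0.

Definition bounded_fun (F : R -> R) : Prop := exists B, forall x, Rabs (F x) <= B.

Lemma beyond_both s A1 A2 : exists A, forall x, beyond s A x -> beyond s A1 x /\ beyond s A2 x.
Proof.
  destruct s; simpl.
  - exists (Rmax A1 A2). intros x H. pose proof (Rmax_l A1 A2). pose proof (Rmax_r A1 A2). lra.
  - exists (Rmin A1 A2). intros x H. pose proof (Rmin_l A1 A2). pose proof (Rmin_r A1 A2). lra.
Qed.

Lemma tends_ext s f g l : (forall x, f x = g x) -> tends s f l -> tends s g l.
Proof.
  intros E H eps He. destruct (H eps He) as [A HA].
  exists A. intros x Hx. rewrite <- E. auto.
Qed.

Lemma asymp_ext s f g F G :
  (forall x, f x = g x) -> (forall x, F x = G x) -> asymp s f F -> asymp s g G.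
Proof. intros E1 E2. apply tends_ext. intro x. now rewrite E1, E2. Qed.

Lemma asymp_const_tends s f L : asymp s f (fun _ => L) <-> tends s f L.
Proof.
  split; intros H eps He; destruct (H eps He) as [A HA]; exists A; intros x Hx;
    specialize (HA x Hx); rewrite Rminus_0_r in *; exact HA.
Qed.

Lemma tends_const_unique s c L : tends s (fun _ => c) L -> c = L.
Proof.
  intros H. destruct (Req_dec c L) as [|n]; auto. exfalso.
  destruct (H (Rabs (c - L))) as [A HA]; [apply Rabs_pos_lt; lra|].
  specialize (HA A). destruct s; simpl in HA; lra.
Qed.

Lemma tends_comp_cont s f L g :
  tends s f L -> continuity_pt g L -> tends s (fun x => g (f x)) (g L).
Proof.
  intros H C eps He. destruct (C eps He) as [d [Hd Hg]].
  destruct (H d Hd) as [A HA]. exists A. intros x Hx.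
  destruct (Req_dec (f x) L) as [E|n].
  - rewrite E, Rminus_diag, Rabs_R0. exact He.
  - apply (Hg (f x)). split; [split; [exact I | auto] | exact (HA x Hx)].
Qed.

Lemma asymp_refl s F : asymp s F F.
Proof.
  intros eps He. exists 0. intros x _.
  rewrite Rminus_diag, Rminus_0_r, Rabs_R0. exact He.
Qed.

Lemma asymp_plus s f g F G :
  asymp s f F -> asymp s g G -> asymp s (fun x => f x + g x) (fun x => F x + G x).
Proof.
  intros H1 H2 eps He.
  destruct (H1 (eps / 2)) as [A1 HA1]; [lra|]. destruct (H2 (eps / 2)) as [A2 HA2]; [lra|].
  destruct (beyond_both s A1 A2) as [A HA]. exists A. intros x Hx.
  destruct (HA x Hx) as [X1 X2]. specialize (HA1 x X1). specialize (HA2 x X2).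
  rewrite Rminus_0_r in *.
  replace (f x + g x - (F x + G x)) with ((f x - F x) + (g x - G x)) by ring.
  eapply Rle_lt_trans; [apply Rabs_triang | lra].
Qed.

Lemma tends0_mult_bounded s f g B :
  tends s f 0 -> (exists A, forall x, beyond s A x -> Rabs (g x) <= B) ->
  tends s (fun x => f x * g x) 0.
Proof.
  intros H [A0 HA0] eps He. pose proof (Rabs_pos B). pose proof (Rle_abs B).
  destruct (H (eps / (Rabs B + 1))) as [A HA]; [apply Rdiv_lt_0_compat; lra|].
  destruct (beyond_both s A A0) as [A' HA']. exists A'. intros x Hx.
  destruct (HA' x Hx) as [X1 X2]. specialize (HA x X1). specialize (HA0 x X2).
  rewrite Rminus_0_r in *. rewrite Rabs_mult. pose proof (Rabs_pos (f x)).
  apply Rle_lt_trans with (Rabs (f x) * (Rabs B + 1)); [apply Rmult_le_compat_l; lra|].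
  replace eps with (eps / (Rabs B + 1) * (Rabs B + 1)) by (field; lra).
  apply Rmult_lt_compat_r; lra.
Qed.

Lemma asymp_scal s c f F : asymp s f F -> asymp s (fun x => c * f x) (fun x => c * F x).
Proof.
  intros H. apply (tends_ext _ (fun x => (f x - F x) * c)); [intro; ring|].
  apply (tends0_mult_bounded _ _ _ (Rabs c)); [exact H|]. exists 0. intros; apply Rle_refl.
Qed.

Lemma asymp_minus s f g F G :
  asymp s f F -> asymp s g G -> asymp s (fun x => f x - g x) (fun x => F x - G x).
Proof.
  intros H1 H2. eapply asymp_ext; [| | apply (asymp_plus s _ _ _ _ H1 (asymp_scal s (-1) _ _ H2))];
    intro; simpl; ring.
Qed.

Lemma asymp_eventually_bounded s f F :
  asymp s f F -> bounded_fun F -> exists B A, forall x, beyond s A x -> Rabs (f x) <= B.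
Proof.
  intros H [B HB]. destruct (H 1 Rlt_0_1) as [A HA]. exists (B + 1), A. intros x Hx.
  specialize (HA x Hx). specialize (HB x). rewrite Rminus_0_r in HA.
  replace (f x) with ((f x - F x) + F x) by ring.
  eapply Rle_trans; [apply Rabs_triang | lra].
Qed.

Lemma asymp_mult s f g F G :
  asymp s f F -> asymp s g G -> bounded_fun F -> bounded_fun G ->
  asymp s (fun x => f x * g x) (fun x => F x * G x).
Proof.
  intros H1 H2 [BF HBF] BG.
  destruct (asymp_eventually_bounded s g G H2 BG) as [Bg HBg].
  apply (tends_ext _ (fun x => ((f x - F x) * g x + (g x - G x) * F x) - (0 + 0)));
    [intro; ring|].
  change (asymp s (fun x => (f x - F x) * g x + (g x - G x) * F x) (fun _ => 0 + 0)).
  apply asymp_plus; apply asymp_const_tends.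
  - now apply tends0_mult_bounded with Bg.
  - apply (tends0_mult_bounded _ _ _ BF); [exact H2 | now exists 0].
Qed.

Lemma bounded_const c : bounded_fun (fun _ => c).
Proof. exists (Rabs c). intro; apply Rle_refl. Qed.

Lemma bounded_plus F G : bounded_fun F -> bounded_fun G -> bounded_fun (fun x => F x + G x).
Proof.
  intros [a Ha] [b Hb]. exists (a + b). intro x.
  eapply Rle_trans; [apply Rabs_triang | specialize (Ha x); specialize (Hb x); lra].
Qed.

Lemma bounded_minus F G : bounded_fun F -> bounded_fun G -> bounded_fun (fun x => F x - G x).
Proof.
  intros [a Ha] [b Hb]. exists (a + b). intro x. unfold Rminus.
  eapply Rle_trans; [apply Rabs_triang|]. rewrite Rabs_Ropp.
  specialize (Ha x). specialize (Hb x). lra.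
Qed.

Lemma bounded_mult F G : bounded_fun F -> bounded_fun G -> bounded_fun (fun x => F x * G x).
Proof.
  intros [a Ha] [b Hb]. exists (a * b). intro x.
  rewrite Rabs_mult. apply Rmult_le_compat; auto using Rabs_pos.
Qed.

Lemma bounded_cos c : bounded_fun (fun x => cos (c * x)).
Proof. exists 1. intro. apply Rabs_le, COS_bound. Qed.

Lemma bounded_sin c : bounded_fun (fun x => sin (c * x)).
Proof. exists 1. intro. apply Rabs_le, SIN_bound. Qed.

Ltac solve_bounded :=
  repeat first [ apply bounded_minus | apply bounded_plus | apply bounded_mult
               | apply bounded_const | apply bounded_cos | apply bounded_sin ].

(** * Asymptotics of the derivative of a solution *)

(* Landau-type interpolation on a unit interval: a function that is small
   together with its second derivative has a small derivative at the ends. *)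
Lemma deriv_bound_unit_interval w w' w'' a x e1 e2 :
  (forall y, D w y (w' y)) -> (forall y, D w' y (w'' y)) -> (x = a \/ x = a + 1) ->
  (forall y, a <= y <= a + 1 -> Rabs (w y) <= e1 /\ Rabs (w'' y) <= e2) ->
  Rabs (w' x) <= 2 * e1 + e2.
Proof.
  intros H1 H2 Hx H.
  destruct (MVT_cor2 w w' a (a + 1)) as [c [Hc1 Hc2]]; [lra | intros; apply H1 |].
  replace (a + 1 - a) with 1 in Hc1 by ring. rewrite Rmult_1_r in Hc1.
  assert (Hwc : Rabs (w' c) <= 2 * e1).
  { rewrite <- Hc1. unfold Rminus. eapply Rle_trans; [apply Rabs_triang|]. rewrite Rabs_Ropp.
    destruct (H a) as [A1 _]; [lra|]. destruct (H (a + 1)) as [A2 _]; [lra|]. lra. }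
  assert (Hd : exists d, a <= d <= a + 1 /\ Rabs (w' x - w' c) <= Rabs (w'' d)).
  { destruct Hx as [-> | ->].
    - destruct (MVT_cor2 w' w'' a c) as [d [Hd1 Hd2]]; [lra | intros; apply H2 |].
      exists d. split; [lra|]. rewrite <- Rabs_Ropp.
      replace (- (w' a - w' c)) with (w'' d * (c - a)) by lra.
      rewrite Rabs_mult, (Rabs_right (c - a)) by lra.
      pose proof (Rabs_pos (w'' d)). nra.
    - destruct (MVT_cor2 w' w'' c (a + 1)) as [d [Hd1 Hd2]]; [lra | intros; apply H2 |].
      exists d. split; [lra|]. rewrite Hd1, Rabs_mult, (Rabs_right (a + 1 - c)) by lra.
      pose proof (Rabs_pos (w'' d)). nra. }
  destruct Hd as [d [Hd1 Hd2]]. destruct (H d Hd1) as [_ Hd3].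
  replace (w' x) with ((w' x - w' c) + w' c) by ring.
  eapply Rle_trans; [apply Rabs_triang | lra].
Qed.

Lemma D_free_wave k al be x :
  D (fun y => al * cos (k * y) + be * sin (k * y)) x (k * (be * cos (k * x) - al * sin (k * x))).
Proof.
  eapply D_eq.
  - apply D_plus; apply D_mult; [apply D_const | apply D_cos | apply D_const | apply D_sin].
  - cbv beta; ring.
Qed.

Lemma D_free_wave' k al be x :
  D (fun y => k * (be * cos (k * y) - al * sin (k * y))) x
    (- k ^ 2 * (al * cos (k * x) + be * sin (k * x))).
Proof.
  eapply D_eq.
  - apply D_mult; [apply D_const|].
    apply D_minus; apply D_mult; [apply D_const | apply D_cos | apply D_const | apply D_sin].
  - cbv beta; ring.
Qed.

Lemma residual_bound q u g k B eta :
  Rabs (u - g) <= eta -> Rabs (q - k ^ 2) <= eta -> Rabs u <= B ->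
  Rabs (- q * u - - k ^ 2 * g) <= eta * (Rabs B + k ^ 2).
Proof.
  intros Hug Hq Hu. pose proof (pow2_ge_0 k). pose proof (Rle_abs B).
  replace (- q * u - - k ^ 2 * g) with ((k ^ 2 - q) * u + - (k ^ 2 * (u - g))) by ring.
  eapply Rle_trans; [apply Rabs_triang|].
  rewrite Rabs_Ropp, !Rabs_mult, (Rabs_right (k ^ 2)) by lra.
  rewrite <- Rabs_Ropp in Hq. replace (- (q - k ^ 2)) with (k ^ 2 - q) in Hq by ring.
  pose proof (Rabs_pos (k ^ 2 - q)). pose proof (Rabs_pos u).
  assert (Rabs (k ^ 2 - q) * Rabs u <= eta * Rabs B) by (apply Rmult_le_compat; lra).
  assert (k ^ 2 * Rabs (u - g) <= k ^ 2 * eta) by (apply Rmult_le_compat_l; lra).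
  nra.
Qed.

Lemma derivative_asymptotics s (u v q : R -> R) k al be :
  (forall x, D u x (v x)) -> (forall x, D v x (- q x * u x)) -> tends s q (k ^ 2) ->
  asymp s u (fun x => al * cos (k * x) + be * sin (k * x)) ->
  asymp s v (fun x => k * (be * cos (k * x) - al * sin (k * x))).
Proof.
  intros Hu Hv Hq Ha.
  set (g := fun x => al * cos (k * x) + be * sin (k * x)).
  set (g' := fun x => k * (be * cos (k * x) - al * sin (k * x))).
  set (g'' := fun x => - k ^ 2 * g x).
  pose proof (D_free_wave k al be) as Dg. pose proof (D_free_wave' k al be) as Dg'.
  destruct (asymp_eventually_bounded s u g Ha) as [Bu [A0 HBu]]; [unfold g; solve_bounded|].
  pose proof (Rabs_pos Bu). pose proof (Rle_abs Bu). pose proof (pow2_ge_0 k).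
  intros eps He.
  set (eta := eps / (2 * (3 + Rabs Bu + k ^ 2))).
  assert (Heta : 0 < eta) by (unfold eta; apply Rdiv_lt_0_compat; lra).
  destruct (Ha eta Heta) as [A1 HA1]. destruct (Hq eta Heta) as [A2 HA2].
  destruct (beyond_both s A1 A2) as [A3 HA3]. destruct (beyond_both s A3 A0) as [A HA].
  exists A. intros x Hx.
  assert (Hsmall : forall y, beyond s A y ->
            Rabs (u y - g y) <= eta /\ Rabs (- q y * u y - g'' y) <= eta * (Rabs Bu + k ^ 2)).
  { intros y Hy. destruct (HA y Hy) as [Y3 Y0]. destruct (HA3 y Y3) as [Y1 Y2].
    specialize (HA1 y Y1). specialize (HA2 y Y2). specialize (HBu y Y0).
    cbv beta in HA1, HA2. fold (g y) in HA1. rewrite Rminus_0_r in HA1.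
    split; [lra | unfold g''; apply residual_bound; lra]. }
  assert (Hw : Rabs (v x - g' x) <= 2 * eta + eta * (Rabs Bu + k ^ 2)).
  { apply (deriv_bound_unit_interval (fun y => u y - g y) (fun y => v y - g' y)
             (fun y => - q y * u y - g'' y) (if s then x else x - 1) x).
    - intro; apply D_minus; auto.
    - intro; apply D_minus; auto.
    - destruct s; [left; reflexivity | right; ring].
    - intros y Hy. apply Hsmall. destruct s; simpl in *; lra. }
  rewrite Rminus_0_r. eapply Rle_lt_trans; [exact Hw|].
  unfold eta. apply Rmult_lt_reg_r with (2 * (3 + Rabs Bu + k ^ 2)); [lra|].
  field_simplify; [nra | lra].
Qed.

Lemma nondecreasing_of_deriv f a b : a <= b ->
  (forall x, a <= x <= b -> continuity_pt f x) ->
  (forall x, a < x < b -> exists d, D f x d /\ 0 <= d) -> f a <= f b.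
Proof.
  intros Hab Hc Hd. destruct (Req_dec a b) as [-> | n]; [lra|].
  set (pr1 := fun c (P : a < c < b) =>
     let s := constructive_indefinite_description _ (Hd c P) in
     exist (fun l => derivable_pt_abs f c l) (proj1_sig s) (proj1 (proj2_sig s))
       : derivable_pt f c).
  set (pr2 := fun c (_ : a < c < b) => derivable_pt_id c).
  destruct (MVT f id a b pr1 pr2 ltac:(lra) Hc) as [c [P HP]].
  { intros. apply derivable_continuous_pt, derivable_pt_id. }
  unfold pr1, pr2 in HP. simpl in HP. rewrite derive_pt_id in HP. unfold id in HP.
  pose proof (proj2 (proj2_sig (constructive_indefinite_description _ (Hd c P)))). nra.
Qed.

Lemma nondecreasing_of_deriv_except_list f (l : list R) : forall a b, a <= b ->
  (forall x, a <= x <= b -> continuity_pt f x) ->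
  (forall x, a < x < b -> ~ In x l -> exists d, D f x d /\ 0 <= d) -> f a <= f b.
Proof.
  induction l as [|p l IH]; intros a b Hab Hc Hd.
  - apply nondecreasing_of_deriv; [exact Hab | exact Hc | intros x Hx; now apply Hd].
  - assert (Hsub : forall a' b', a <= a' -> b' <= b -> a' <= b' -> ~ (a' < p < b') ->
              f a' <= f b').
    { intros a' b' H1 H2 H3 Hp. apply IH; [lra | intros; apply Hc; lra |].
      intros x Hx Hn. apply Hd; [lra|]. intros [E|E]; [subst; lra | auto]. }
    destruct (Rlt_dec a p) as [H1|H1]; [destruct (Rlt_dec p b) as [H2|H2]|].
    + apply Rle_trans with (f p); apply Hsub; lra.
    + apply Hsub; lra.
    + apply Hsub; lra.
Qed.

Lemma nondecreasing_of_deriv_except f (E : R -> Prop) a b : locally_finite E -> a <= b ->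
  (forall x, a <= x <= b -> continuity_pt f x) ->
  (forall x, a < x < b -> ~ E x -> exists d, D f x d /\ 0 <= d) -> f a <= f b.
Proof.
  intros Hlf Hab Hc Hd. destruct (Hlf a b) as [l Hl].
  apply (nondecreasing_of_deriv_except_list f l a b Hab Hc).
  intros x Hx Hn. apply Hd; auto. intro HE. apply Hn, Hl; [auto | lra].
Qed.

Lemma constant_of_deriv_zero f : (forall x, D f x 0) -> forall a b, f a = f b.
Proof.
  intros H.
  assert (Hle : forall a b, a < b -> f a = f b).
  { intros a b Hab. destruct (MVT_cor2 f (fun _ => 0) a b Hab) as [c [Hc _]];
      [intros; apply H | lra]. }
  intros a b. destruct (Rtotal_order a b) as [h | [-> | h]]; auto.
  symmetry. auto.
Qed.

Lemma deriv_nonneg_of_nondecreasing f x l x0 :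
  x < x0 -> (forall y z, y <= z <= x0 -> f y <= f z) -> D f x l -> 0 <= l.
Proof.
  intros Hx Hm H. destruct (Rle_dec 0 l) as [|n]; auto. exfalso.
  destruct (H (- l / 2)) as [del Hdel]; [lra|]. pose proof (cond_pos del).
  set (h := Rmin (del / 2) ((x0 - x) / 2)).
  assert (Hh : 0 < h) by (unfold h; apply Rmin_glb_lt; lra).
  pose proof (Rmin_l (del / 2) ((x0 - x) / 2)) as Hh1.
  pose proof (Rmin_r (del / 2) ((x0 - x) / 2)) as Hh2. fold h in Hh1, Hh2.
  specialize (Hdel h (Rgt_not_eq _ _ Hh)). rewrite Rabs_right in Hdel by lra.
  specialize (Hdel ltac:(lra)).
  assert (f x <= f (x + h)) by (apply Hm; lra).
  assert (0 <= (f (x + h) - f x) / h) by (apply Rdiv_nonneg; lra).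
  apply Rabs_def2 in Hdel. lra.
Qed.

Lemma deriv_nonpos_of_nonincreasing f x l x0 :
  x0 < x -> (forall y z, x0 <= y <= z -> f z <= f y) -> D f x l -> l <= 0.
Proof.
  intros Hx Hm H.
  assert (Hopp : 0 <= - l).
  { apply (deriv_nonneg_of_nondecreasing (fun y => f (- y)) (- x) (- l) (- x0)); [lra | |].
    - intros y z Hyz. apply Hm. lra.
    - eapply D_eq.
      + apply (D_comp (fun y => - y) f); [apply derivable_pt_lim_opp, derivable_pt_lim_id|].
        rewrite Ropp_involutive. exact H.
      + ring. }
  lra.
Qed.

Lemma RiemannInt_nonneg f a b (pr : Riemann_integrable f a b) :
  a <= b -> (forall x, 0 <= f x) -> 0 <= RiemannInt pr.
Proof.
  intros Hab Hf. pose proof (RiemannInt_P15 (RiemannInt_P14 a b 0)) as E.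
  rewrite Rmult_0_l in E. rewrite <- E.
  apply RiemannInt_P19; [exact Hab | intros; unfold fct_cte; auto].
Qed.

Lemma RiemannInt_le_improper f I : (forall x, 0 <= f x) -> improper_integral f I ->
  forall a b (pr : Riemann_integrable f a b), a <= b -> RiemannInt pr <= I.
Proof.
  intros Hf [Hint Hlim] a b pr Hab. destruct (Rle_dec (RiemannInt pr) I) as [|n]; auto.
  exfalso. destruct (Hlim (RiemannInt pr - I)) as [A HA]; [lra|].
  set (a' := Rmin a (- A)). set (b' := Rmax b A).
  assert (H1 : a' <= a) by apply Rmin_l. assert (H2 : b <= b') by apply Rmax_l.
  destruct (Hint a' a H1) as [p1]. destruct (Hint b b' H2) as [p3].
  destruct (Hint a' b ltac:(lra)) as [p2]. destruct (Hint a' b' ltac:(lra)) as [p4].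
  specialize (HA a' b' p4 (Rmin_r _ _) (Rmax_r _ _)).
  pose proof (RiemannInt_P26 p1 pr p2). pose proof (RiemannInt_P26 p2 p3 p4).
  pose proof (RiemannInt_nonneg f a' a p1 H1 Hf).
  pose proof (RiemannInt_nonneg f b b' p3 H2 Hf).
  apply Rabs_def2 in HA. lra.
Qed.

Lemma primitive_endpoints (f : R -> R) a b (h : a <= b)
  (C0 : forall x, a <= x <= b -> continuity_pt f x) (pr : Riemann_integrable f a b) :
  primitive h (FTC_P1 h C0) a = 0 /\ primitive h (FTC_P1 h C0) b = RiemannInt pr.
Proof.
  unfold primitive. split.
  - destruct (Rle_dec a a) as [|n]; [|exfalso; apply n; lra].
    destruct (Rle_dec a b) as [|n]; [|exfalso; apply n; lra].
    apply RiemannInt_P9.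
  - destruct (Rle_dec a b) as [|n]; [|exfalso; apply n; lra].
    destruct (Rle_dec b b) as [|n]; [|exfalso; apply n; lra].
    apply RiemannInt_P5.
Qed.

(** * The Lyapunov functional *)

(* For a complex solution [u = ur + i ui] with [u' = vr + i vi] of
   [u'' + (k^2 - chi^2) u = 0] we use the weight [h = k + chi] and
     energy    P = (|u'|^2 + h^2 |u|^2) / (2h),
     Wronskian W = Im (conj u * u') = ur vi - ui vr,
     Lyapunov  G = P + sqrt (P^2 - W^2 + eps),
   the [eps > 0] only serving to make the square root differentiable. *)
Section Lyapunov.

Variables (k eps : R) (chi ur ui vr vi : R -> R).
Hypotheses (Hk : 0 < k) (Heps : 0 < eps) (Hchi : forall y, 0 <= chi y).

Definition weight (y : R) : R := k + chi y.

Definition energy (y : R) : R :=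
  (vr y ^ 2 + vi y ^ 2 + weight y ^ 2 * (ur y ^ 2 + ui y ^ 2)) / (2 * weight y).

Definition wronskian (y : R) : R := ur y * vi y - ui y * vr y.

Definition lyapunov (y : R) : R := energy y + sqrt (energy y ^ 2 - wronskian y ^ 2 + eps).

Lemma weight_pos y : 0 < weight y.
Proof. unfold weight. pose proof (Hchi y). lra. Qed.

Lemma energy_nonneg y : 0 <= energy y.
Proof.
  pose proof (weight_pos y). unfold energy. apply Rdiv_nonneg; [|lra].
  pose proof (pow2_ge_0 (vr y)). pose proof (pow2_ge_0 (vi y)).
  pose proof (pow2_ge_0 (ur y)). pose proof (pow2_ge_0 (ui y)).
  pose proof (pow2_ge_0 (weight y)). nra.
Qed.

(* Lagrange-type identity behind [P >= |W|]: with [Z1 = 2h Re(conj u u')] and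
   [Z2 = h^2 |u|^2 - |u'|^2] one has [P^2 - W^2 = (Z1^2 + Z2^2) / (2h)^2]. *)
Lemma energy_wronskian_identity ur0 ui0 vr0 vi0 h : 0 < h ->
  ((vr0 ^ 2 + vi0 ^ 2 + h ^ 2 * (ur0 ^ 2 + ui0 ^ 2)) / (2 * h)) ^ 2
    - (ur0 * vi0 - ui0 * vr0) ^ 2 =
  ((2 * h * (ur0 * vr0 + ui0 * vi0)) ^ 2 + (h ^ 2 * (ur0 ^ 2 + ui0 ^ 2) - (vr0 ^ 2 + vi0 ^ 2)) ^ 2)
    / (2 * h) ^ 2.
Proof. intros. field. lra. Qed.

Lemma discriminant_nonneg y : 0 <= energy y ^ 2 - wronskian y ^ 2.
Proof.
  pose proof (weight_pos y). unfold energy, wronskian.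
  rewrite energy_wronskian_identity by assumption.
  apply Rdiv_nonneg; [apply Rplus_le_le_0_compat; apply pow2_ge_0 | nra].
Qed.

Lemma lyapunov_pos y : 0 < lyapunov y.
Proof.
  pose proof (energy_nonneg y). pose proof (discriminant_nonneg y).
  pose proof (sqrt_lt_R0 (energy y ^ 2 - wronskian y ^ 2 + eps) ltac:(lra)).
  unfold lyapunov. lra.
Qed.

Lemma lyapunov_continuous x : continuity_pt chi x -> continuity_pt ur x ->
  continuity_pt ui x -> continuity_pt vr x -> continuity_pt vi x -> continuity_pt lyapunov x.
Proof.
  intros Cc Cur Cui Cvr Cvi.
  assert (Cw : continuity_pt weight x) by (apply cont_plus; auto using cont_const).
  assert (CP : continuity_pt energy x).
  { apply (cont_ext (fun y => (vr y ^ 2 + vi y ^ 2 + weight y ^ 2 * (ur y ^ 2 + ui y ^ 2))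
                               * / (2 * weight y))); [reflexivity|].
    apply cont_mult.
    - apply cont_plus; [apply cont_plus; apply cont_sq; assumption|].
      apply cont_mult; [apply cont_sq; exact Cw | apply cont_plus; apply cont_sq; assumption].
    - apply cont_inv; [apply cont_mult; auto using cont_const | pose proof (weight_pos x); lra]. }
  assert (CW : continuity_pt wronskian x) by (apply cont_minus; apply cont_mult; auto).
  apply cont_plus; [exact CP|]. apply cont_sqrt.
  - apply cont_plus; [apply cont_minus; apply cont_sq; auto | apply cont_const].
  - pose proof (discriminant_nonneg x). lra.
Qed.

Section AtPoint.

Variables (k2 : R -> R) (c x : R).
Hypotheses (Dur : D ur x (vr x)) (Dui : D ui x (vi x))
  (Dvr : D vr x (- k2 x * ur x)) (Dvi : D vi x (- k2 x * ui x))
  (Dchi : D chi x c) (Ek2 : k2 x = k ^ 2 - chi x ^ 2).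

Lemma D_wronskian : D wronskian x 0.
Proof. eapply D_eq; [apply D_minus; apply D_mult; eauto | ring]. Qed.

Let Pd := 2 * chi x * (ur x * vr x + ui x * vi x)
          + c * (weight x ^ 2 * (ur x ^ 2 + ui x ^ 2) - (vr x ^ 2 + vi x ^ 2)) / (2 * weight x ^ 2).

Lemma D_energy : D energy x Pd.
Proof.
  pose proof (weight_pos x) as Hw.
  assert (Dw : D weight x c) by (eapply D_eq; [apply D_plus; [apply D_const | apply Dchi] | ring]).
  eapply D_eq.
  - apply (derivable_pt_lim_ext
             (fun y => (vr y ^ 2 + vi y ^ 2 + weight y ^ 2 * (ur y ^ 2 + ui y ^ 2))
                       * / (2 * weight y))); [reflexivity|].
    apply D_mult.
    + apply D_plus; [apply D_plus; apply D_sq; eauto|].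
      apply D_mult; [apply D_sq; eauto | apply D_plus; apply D_sq; eauto].
    + apply D_inv; [eapply D_eq; [apply D_mult; [apply D_const | apply Dw] | reflexivity] | lra].
  - unfold Pd. rewrite Ek2. unfold weight in *. field. lra.
Qed.

(* Key estimate: [|P'| <= (|h'|/h + 2 chi) sqrt (P^2 - W^2)], by Cauchy-Schwarz
   on the identity [energy_wronskian_identity]. *)
Lemma energy_deriv_bound :
  Rabs Pd <= (Rabs c / weight x + 2 * chi x) * sqrt (energy x ^ 2 - wronskian x ^ 2).
Proof.
  pose proof (weight_pos x) as Hh. pose proof (Hchi x) as Hc. unfold Pd, energy, wronskian.
  set (h := weight x) in *.
  rewrite energy_wronskian_identity by assumption.
  set (Z1 := 2 * h * (ur x * vr x + ui x * vi x)).
  set (Z2 := h ^ 2 * (ur x ^ 2 + ui x ^ 2) - (vr x ^ 2 + vi x ^ 2)).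
  assert (Hs : sqrt ((Z1 ^ 2 + Z2 ^ 2) / (2 * h) ^ 2) = sqrt (Z1 ^ 2 + Z2 ^ 2) / (2 * h)).
  { rewrite sqrt_div_alt by nra. rewrite sqrt_pow2 by lra. reflexivity. }
  rewrite Hs.
  replace (2 * chi x * (ur x * vr x + ui x * vi x) + c * Z2 / (2 * h ^ 2))
    with (chi x / h * Z1 + c / (2 * h ^ 2) * Z2) by (unfold Z1; field; lra).
  assert (HZ : forall a b, Rabs a <= sqrt (a ^ 2 + b ^ 2)).
  { intros a b. rewrite <- sqrt_Rsqr_abs. apply sqrt_le_1_alt. unfold Rsqr. nra. }
  pose proof (HZ Z1 Z2) as HZ1. pose proof (HZ Z2 Z1) as HZ2.
  replace (Z2 ^ 2 + Z1 ^ 2) with (Z1 ^ 2 + Z2 ^ 2) in HZ2 by ring.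
  eapply Rle_trans; [apply Rabs_triang|]. rewrite !Rabs_mult.
  rewrite (Rabs_right (chi x / h)) by (apply Rle_ge, Rdiv_nonneg; lra).
  assert (Rabs (c / (2 * h ^ 2)) = Rabs c / (2 * h ^ 2)) as ->.
  { unfold Rdiv. rewrite Rabs_mult, (Rabs_right (/ _)); [reflexivity|].
    left. apply Rinv_0_lt_compat. nra. }
  pose proof (Rabs_pos c).
  assert (chi x / h * Rabs Z1 <= chi x / h * sqrt (Z1 ^ 2 + Z2 ^ 2))
    by (apply Rmult_le_compat_l; [apply Rdiv_nonneg|]; lra).
  assert (Rabs c / (2 * h ^ 2) * Rabs Z2 <= Rabs c / (2 * h ^ 2) * sqrt (Z1 ^ 2 + Z2 ^ 2))
    by (apply Rmult_le_compat_l; [apply Rdiv_nonneg|]; nra).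
  replace ((Rabs c / h + 2 * chi x) * (sqrt (Z1 ^ 2 + Z2 ^ 2) / (2 * h)))
    with (chi x / h * sqrt (Z1 ^ 2 + Z2 ^ 2) + Rabs c / (2 * h ^ 2) * sqrt (Z1 ^ 2 + Z2 ^ 2))
    by (field; lra).
  lra.
Qed.

(* Consequently [G' >= - (|h'|/h + 2 chi) G]: since [G' = P' G / sqrt(...)]
   and [sqrt (P^2 - W^2) <= sqrt (P^2 - W^2 + eps)]. *)
Lemma lyapunov_deriv_lower :
  exists d, D lyapunov x d /\ - (Rabs c / weight x + 2 * chi x) * lyapunov x <= d.
Proof.
  set (Q := energy x ^ 2 - wronskian x ^ 2).
  assert (HQ : 0 <= Q) by apply discriminant_nonneg.
  set (S := sqrt (Q + eps)).
  assert (HS : 0 < S) by (apply sqrt_lt_R0; lra).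
  exists (Pd * (lyapunov x / S)). split.
  - eapply D_eq.
    + unfold lyapunov. apply D_plus; [apply D_energy|]. apply D_sqrt; [|cbv beta; fold Q; lra].
      apply D_plus; [|apply D_const].
      apply D_minus; apply D_sq; [apply D_energy | apply D_wronskian].
    + cbv beta. fold Q S. unfold lyapunov. fold Q S. field. lra.
  - set (a := Rabs c / weight x + 2 * chi x).
    assert (Ha : 0 <= a).
    { pose proof (Rabs_pos c). pose proof (weight_pos x). pose proof (Hchi x).
      assert (0 <= Rabs c / weight x) by (apply Rdiv_nonneg; lra). unfold a. lra. }
    assert (HQS : sqrt Q <= S) by (apply sqrt_le_1_alt; lra).
    assert (HPd : - (a * S) <= Pd).
    { pose proof energy_deriv_bound as HB.
      pose proof (Rle_abs (- Pd)) as HPd0. rewrite Rabs_Ropp in HPd0.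
      fold a Q in HB. pose proof (Rmult_le_compat_l a _ _ Ha HQS). lra. }
    pose proof (lyapunov_pos x).
    replace (- a * lyapunov x) with (- (a * S) * (lyapunov x / S)) by (field; lra).
    apply Rmult_le_compat_r; [apply Rdiv_nonneg|]; lra.
Qed.

End AtPoint.
End Lyapunov.

(** * Growth of the Lyapunov functional across a single-hump barrier *)

Lemma product_deriv_nonneg G m x dG dm a :
  D G x dG -> D m x dm -> - a * G x <= dG -> a * m x <= dm -> 0 <= G x -> 0 <= m x ->
  exists d, D (fun y => G y * m y) x d /\ 0 <= d.
Proof.
  intros DG Dm HG Hm G0 m0. exists (dG * m x + G x * dm). split; [now apply D_mult | nra].
Qed.

(* Chaining the two monotone pieces through the top of the hump. *)
Lemma chain_ratio Ga Gx Gb ha hx hb Ex Eb :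
  0 < Gb -> 0 < Gx -> 0 < ha -> 0 < hx -> 0 < hb -> 0 < Ex ->
  Ga * (ha * 1) <= Gx * (hx * Ex) -> Gx * (Ex * / hx) <= Gb * (Eb * / hb) ->
  Ga <= Gb * Eb * (hx ^ 2 / (ha * hb)).
Proof.
  intros HGb HGx Hha Hhx Hhb HEx Hl Hr. apply Rmult_le_reg_r with ha; [lra|].
  apply Rle_trans with (Gx * (hx * Ex)); [lra|].
  apply Rmult_le_compat_r with (r := hx) in Hr; [|lra].
  replace (Gx * (Ex * / hx) * hx) with (Gx * Ex) in Hr by (field; lra).
  replace (Gb * Eb * (hx ^ 2 / (ha * hb)) * ha) with (Gb * (Eb * / hb) * hx * hx)
    by (field; lra).
  apply Rle_trans with (Gx * Ex * hx); [lra|]. apply Rmult_le_compat_r; lra.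
Qed.

(* The weight ratio appearing in the chain is at most
   [((k + M) / k)^2 <= exp (2M/k)]. *)
Lemma weight_ratio_bound k chi M a x0 b :
  0 < k -> (forall y, 0 <= chi y) -> (forall y, chi y <= M) ->
  weight k chi x0 ^ 2 / (weight k chi a * weight k chi b) <= exp (2 * (M / k)).
Proof.
  intros Hk Hchi HM. unfold weight.
  pose proof (Hchi a). pose proof (Hchi b). pose proof (Hchi x0). pose proof (HM x0).
  assert (Hsq : (k + chi x0) ^ 2 / ((k + chi a) * (k + chi b)) <= (1 + M / k) ^ 2).
  { replace ((1 + M / k) ^ 2) with ((k + M) ^ 2 / (k * k)) by (field; lra).
    apply Rle_trans with ((k + M) ^ 2 / ((k + chi a) * (k + chi b))).
    - apply Rmult_le_compat_r; [left; apply Rinv_0_lt_compat; nra|]. apply pow_incr. lra.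
    - apply Rmult_le_compat_l; [nra|]. apply Rinv_le_contravar; nra. }
  assert (0 <= M / k) by (apply Rdiv_nonneg; lra).
  replace (2 * (M / k)) with (M / k + M / k) by ring. rewrite exp_plus.
  pose proof (exp_ineq1_le (M / k)). simpl in *. nra.
Qed.

Section Barrier.

Variables (k eps : R) (k2 chi ur ui vr vi : R -> R).
Hypotheses (Hk : 0 < k) (Heps : 0 < eps) (Hchi : forall y, 0 <= chi y)
  (Cchi : continuity chi) (Hpc : piecewise_C1 chi)
  (Dur : forall y, D ur y (vr y)) (Dui : forall y, D ui y (vi y))
  (Dvr : forall y, D vr y (- k2 y * ur y)) (Dvi : forall y, D vi y (- k2 y * ui y))
  (Ek2 : forall y, k2 y = k ^ 2 - chi y ^ 2).

Let G := lyapunov k eps chi ur ui vr vi.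
Let h := weight k chi.

Lemma G_continuous x : continuity_pt G x.
Proof. apply lyapunov_continuous; auto; eapply cont_of_D; eauto. Qed.

Lemma D_weight c x : D chi x c -> D h x c.
Proof.
  intros Dc. unfold h, weight. eapply D_eq; [apply D_plus; [apply D_const | exact Dc] | ring].
Qed.

Lemma D_exp_primitive J x :
  D J x (chi x) -> D (fun y => exp (2 * J y)) x (exp (2 * J x) * (2 * chi x)).
Proof.
  intros DJ. apply (D_exp (fun y => 2 * J y)).
  eapply D_eq; [apply D_mult; [apply D_const | exact DJ] | cbv beta; ring].
Qed.

Lemma lyapunov_up J c x : D J x (chi x) -> D chi x c -> 0 <= c ->
  exists d, D (fun y => G y * (h y * exp (2 * J y))) x d /\ 0 <= d.
Proof.
  intros DJ Dc Hc. pose proof (weight_pos k chi Hk Hchi x) as Hh.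
  destruct (lyapunov_deriv_lower k eps chi ur ui vr vi Hk Heps Hchi k2 c x)
    as [dG [DG HG]]; auto.
  apply (product_deriv_nonneg G (fun y => h y * exp (2 * J y)) x dG
           (c * exp (2 * J x) + h x * (exp (2 * J x) * (2 * chi x)))
           (Rabs c / h x + 2 * chi x)); auto.
  - apply (D_mult h (fun y => exp (2 * J y))); [now apply D_weight | now apply D_exp_primitive].
  - rewrite Rabs_right by lra. right. unfold h in *. field. lra.
  - left. apply lyapunov_pos; auto.
  - pose proof (exp_pos (2 * J x)). fold h in Hh. nra.
Qed.

Lemma lyapunov_down J c x : D J x (chi x) -> D chi x c -> c <= 0 ->
  exists d, D (fun y => G y * (exp (2 * J y) * / h y)) x d /\ 0 <= d.
Proof.
  intros DJ Dc Hc. pose proof (weight_pos k chi Hk Hchi x) as Hh.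
  destruct (lyapunov_deriv_lower k eps chi ur ui vr vi Hk Heps Hchi k2 c x)
    as [dG [DG HG]]; auto.
  apply (product_deriv_nonneg G (fun y => exp (2 * J y) * / h y) x dG
           (exp (2 * J x) * (2 * chi x) * / h x + exp (2 * J x) * (- c / h x ^ 2))
           (Rabs c / h x + 2 * chi x)); auto.
  - apply (D_mult (fun y => exp (2 * J y)) (fun y => / h y)).
    + now apply D_exp_primitive.
    + apply D_inv; [now apply D_weight | apply Rgt_not_eq; exact Hh].
  - rewrite Rabs_left1 by lra. right. unfold h in *. field. lra.
  - left. apply lyapunov_pos; auto.
  - pose proof (exp_pos (2 * J x)). fold h in Hh.
    apply Rmult_le_pos; [lra | left; now apply Rinv_0_lt_compat].
Qed.

Lemma lyapunov_growth (x0 a b : R) (J : R -> R) :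
  (forall x y, x <= y <= x0 -> chi x <= chi y) -> (forall x y, x0 <= x <= y -> chi y <= chi x) ->
  a <= x0 <= b -> (forall x, a <= x <= b -> D J x (chi x)) -> J a = 0 ->
  G a <= G b * exp (2 * J b) * (h x0 ^ 2 / (h a * h b)).
Proof.
  intros Hup Hdn Hab DJ Ja.
  assert (CE : forall x, a <= x <= b -> continuity_pt (fun y => exp (2 * J y)) x).
  { intros x Hx. apply cont_exp, cont_mult; [apply cont_const | eapply cont_of_D; eauto]. }
  assert (Ch : forall x, continuity_pt h x)
    by (intro; unfold h, weight; apply cont_plus; auto using cont_const).
  pose proof (fun y => weight_pos k chi Hk Hchi y) as Hh. fold h in Hh.
  destruct Hpc as [E [c' [Hlf [Hd _]]]].
  assert (Hleft : G a * (h a * exp (2 * J a)) <= G x0 * (h x0 * exp (2 * J x0))).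
  { apply (nondecreasing_of_deriv_except (fun y => G y * (h y * exp (2 * J y))) E a x0 Hlf);
      [lra | |].
    - intros x Hx. apply cont_mult; [apply G_continuous|].
      apply cont_mult; [apply Ch | apply CE; lra].
    - intros x Hx Hn. destruct (Hd x Hn) as [Dc _].
      apply (lyapunov_up J (c' x)); [apply DJ; lra | exact Dc |].
      apply (deriv_nonneg_of_nondecreasing chi x (c' x) x0); auto; lra. }
  assert (Hright : G x0 * (exp (2 * J x0) * / h x0) <= G b * (exp (2 * J b) * / h b)).
  { apply (nondecreasing_of_deriv_except (fun y => G y * (exp (2 * J y) * / h y)) E x0 b Hlf);
      [lra | |].
    - intros x Hx. apply cont_mult; [apply G_continuous|].
      apply cont_mult; [apply CE; lra | apply cont_inv; [apply Ch | specialize (Hh x); lra]].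
    - intros x Hx Hn. destruct (Hd x Hn) as [Dc _].
      apply (lyapunov_down J (c' x)); [apply DJ; lra | exact Dc |].
      apply (deriv_nonpos_of_nonincreasing chi x (c' x) x0); auto; lra. }
  rewrite Ja, Rmult_0_r, exp_0 in Hleft.
  exact (chain_ratio _ _ _ _ _ _ _ _
           (lyapunov_pos k eps chi ur ui vr vi Hk Heps Hchi b)
           (lyapunov_pos k eps chi ur ui vr vi Hk Heps Hchi x0)
           (Hh a) (Hh x0) (Hh b) (exp_pos _) Hleft Hright).
Qed.

Lemma lyapunov_barrier_bound M I x0 a b :
  (forall x y, x <= y <= x0 -> chi x <= chi y) -> (forall x y, x0 <= x <= y -> chi y <= chi x) ->
  (forall y, chi y <= M) -> improper_integral chi I -> a <= x0 <= b ->
  G a <= exp (2 * (M / k + I)) * G b.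
Proof.
  intros Hup Hdn HM HI Hab.
  assert (Hab' : a <= b) by lra.
  assert (Cc : forall x, a <= x <= b -> continuity_pt chi x) by (intros; apply Cchi).
  set (J := primitive Hab' (FTC_P1 Hab' Cc)).
  set (pr := continuity_implies_RiemannInt Hab' Cc).
  destruct (primitive_endpoints chi a b Hab' Cc pr) as [Ja Jb]. fold J in Ja, Jb.
  assert (DJ : forall x, a <= x <= b -> D J x (chi x)) by (intros; now apply RiemannInt_P28).
  pose proof (lyapunov_growth x0 a b J Hup Hdn Hab DJ Ja) as Hgrowth.
  assert (HJb : exp (2 * J b) <= exp (2 * I)).
  { assert (J b <= I) by (rewrite Jb; apply (RiemannInt_le_improper chi); auto).
    destruct (Rle_lt_or_eq_dec _ _ H) as [Hlt | ->]; [left; apply exp_increasing; lra | lra]. }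
  assert (Hratio : h x0 ^ 2 / (h a * h b) <= exp (2 * (M / k))).
  { apply weight_ratio_bound; auto. }
  pose proof (lyapunov_pos k eps chi ur ui vr vi Hk Heps Hchi b) as HGb.
  pose proof (exp_pos (2 * J b)).
  assert (0 <= h x0 ^ 2 / (h a * h b)).
  { pose proof (weight_pos k chi Hk Hchi a). pose proof (weight_pos k chi Hk Hchi b).
    apply Rdiv_nonneg; [apply pow2_ge_0 | now apply Rmult_lt_0_compat]. }
  replace (2 * (M / k + I)) with (2 * I + 2 * (M / k)) by ring. rewrite exp_plus.
  eapply Rle_trans; [exact Hgrowth|]. fold G in HGb.
  replace (exp (2 * I) * exp (2 * (M / k)) * G b)
    with (G b * exp (2 * I) * exp (2 * (M / k))) by ring.
  apply Rmult_le_compat; [nra | lra | | exact Hratio].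
  apply Rmult_le_compat_l; [lra | exact HJb].
Qed.

End Barrier.

Lemma cos2_sin2 x : cos x ^ 2 + sin x ^ 2 = 1.
Proof. pose proof (sin2_cos2 x). unfold Rsqr in H. lra. Qed.

Lemma asymp_sq s f F :
  asymp s f F -> bounded_fun F -> asymp s (fun x => f x ^ 2) (fun x => F x ^ 2).
Proof.
  intros H B. eapply asymp_ext; [| | apply (asymp_mult s f f F F H H B B)]; intro; simpl; ring.
Qed.

Lemma bounded_sq F : bounded_fun F -> bounded_fun (fun x => F x ^ 2).
Proof.
  intros [a Ha]. exists (a * a). intro x. rewrite <- RPow_abs. simpl. rewrite Rmult_1_r.
  apply Rmult_le_compat; auto using Rabs_pos.
Qed.

(* At an end where [chi -> 0] and the solution is asymptotically a free wave
   [u ~ (al + i ga) cos(kx) + (be + i de) sin(kx)], the Wronskian and the excess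
   [P - W] of the energy over it have explicit limits. *)
Section FreeWaves.

Variables (s : bool) (ur ui vr vi chi : R -> R) (k al be ga de : R).
Hypotheses (Hk : 0 < k) (Hchi : forall y, 0 <= chi y) (Lchi : tends s chi 0)
  (Aur : asymp s ur (fun x => al * cos (k * x) + be * sin (k * x)))
  (Aui : asymp s ui (fun x => ga * cos (k * x) + de * sin (k * x)))
  (Avr : asymp s vr (fun x => k * (be * cos (k * x) - al * sin (k * x))))
  (Avi : asymp s vi (fun x => k * (de * cos (k * x) - ga * sin (k * x)))).

Lemma wronskian_limit : tends s (wronskian ur ui vr vi) (k * (al * de - be * ga)).
Proof.
  apply asymp_const_tends. unfold wronskian.
  eapply asymp_ext; [reflexivity | | apply asymp_minus; apply asymp_mult; eauto; solve_bounded].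
  intro x. pose proof (cos2_sin2 (k * x)) as E.
  transitivity (k * (al * de - be * ga) * (cos (k * x) ^ 2 + sin (k * x) ^ 2));
    [cbv beta; ring | rewrite E; ring].
Qed.

Lemma inv_weight_asymp : asymp s (fun y => / (2 * weight k chi y)) (fun _ => / (2 * k)).
Proof.
  intros eps He. destruct (Lchi (2 * k ^ 2 * eps)) as [A HA];
    [apply Rmult_lt_0_compat; nra|].
  exists A. intros x Hx. specialize (HA x Hx). specialize (Hchi x). unfold weight.
  rewrite Rminus_0_r in *. rewrite Rabs_right in HA by lra.
  replace (/ (2 * (k + chi x)) - / (2 * k)) with (- (chi x / (2 * k * (k + chi x))))
    by (field; lra).
  rewrite Rabs_Ropp, Rabs_right by (apply Rle_ge, Rdiv_nonneg; nra).
  apply Rle_lt_trans with (chi x / (2 * k ^ 2)).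
  - unfold Rdiv. apply Rmult_le_compat_l; auto. apply Rinv_le_contravar; nra.
  - apply Rmult_lt_reg_r with (2 * k ^ 2); [nra|]. field_simplify; nra.
Qed.

(* [P - W = |u' - i h u|^2 / (2h)], whence the limit. *)
Lemma energy_excess_limit :
  tends s (fun y => energy k chi ur ui vr vi y - wronskian ur ui vr vi y)
    (k * ((be + ga) ^ 2 + (de - al) ^ 2) / 2).
Proof.
  apply asymp_const_tends.
  set (P1 := fun x => k * (be * cos (k * x) - al * sin (k * x))
                      + k * (ga * cos (k * x) + de * sin (k * x))).
  set (P2 := fun x => k * (de * cos (k * x) - ga * sin (k * x))
                      - k * (al * cos (k * x) + be * sin (k * x))).
  assert (B1 : bounded_fun P1) by (unfold P1; solve_bounded).
  assert (B2 : bounded_fun P2) by (unfold P2; solve_bounded).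
  assert (Hw : asymp s (weight k chi) (fun _ => k)).
  { apply (tends_ext _ chi); [intro; unfold weight; ring | exact Lchi]. }
  assert (A1 : asymp s (fun y => vr y + weight k chi y * ui y) P1).
  { apply asymp_plus; auto. apply asymp_mult; auto using bounded_const. solve_bounded. }
  assert (A2 : asymp s (fun y => vi y - weight k chi y * ur y) P2).
  { apply asymp_minus; auto. apply asymp_mult; auto using bounded_const. solve_bounded. }
  apply (asymp_ext s (fun y => ((vr y + weight k chi y * ui y) ^ 2
                                + (vi y - weight k chi y * ur y) ^ 2) * / (2 * weight k chi y))
                    _ (fun x => (P1 x ^ 2 + P2 x ^ 2) * / (2 * k))).
  - intro y. pose proof (weight_pos k chi Hk Hchi y). unfold energy, wronskian. field. lra.
  - intro x. unfold P1, P2. pose proof (cos2_sin2 (k * x)) as E.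
    transitivity (k * ((be + ga) ^ 2 + (de - al) ^ 2) / 2 * (cos (k * x) ^ 2 + sin (k * x) ^ 2));
      [field; lra | rewrite E; ring].
  - apply (asymp_mult s _ _ (fun x => P1 x ^ 2 + P2 x ^ 2) (fun _ => / (2 * k)));
      [apply asymp_plus; now apply asymp_sq | exact inv_weight_asymp
      | apply bounded_plus; now apply bounded_sq | apply bounded_const].
Qed.

End FreeWaves.

Lemma lyapunov_limit s k eps chi ur ui vr vi W0 Y :
  (forall y, wronskian ur ui vr vi y = W0) ->
  tends s (fun y => energy k chi ur ui vr vi y - wronskian ur ui vr vi y) Y ->
  0 <= Y * (Y + 2 * W0) + eps ->
  tends s (lyapunov k eps chi ur ui vr vi) (Y + W0 + sqrt (Y * (Y + 2 * W0) + eps)).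
Proof.
  intros HW HY Hpos.
  set (Yf := fun y => energy k chi ur ui vr vi y - wronskian ur ui vr vi y) in *.
  apply (tends_ext _ (fun y => Yf y + W0 + sqrt (Yf y * (Yf y + 2 * W0) + eps))).
  { intro y. unfold lyapunov, Yf. rewrite HW. f_equal; [ring | f_equal; ring]. }
  apply asymp_const_tends. apply asymp_plus.
  - apply asymp_plus; [now apply asymp_const_tends | apply asymp_refl].
  - apply asymp_const_tends.
    apply (tends_comp_cont s (fun y => Yf y * (Yf y + 2 * W0) + eps) _ sqrt);
      [| now apply continuity_pt_sqrt].
    apply asymp_const_tends. apply asymp_plus; [|apply asymp_refl].
    apply asymp_mult; try apply bounded_const; apply asymp_const_tends; [exact HY|].
    apply asymp_const_tends. apply asymp_plus; [now apply asymp_const_tends | apply asymp_refl].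
Qed.

Lemma limit_comparison F G L1 L2 K x0 :
  tends false F L1 -> tends true G L2 -> 0 < K ->
  (forall a b, a <= x0 <= b -> F a <= K * G b) -> L1 <= K * L2.
Proof.
  intros H1 H2 HK H. destruct (Rle_dec L1 (K * L2)) as [|n]; auto. exfalso.
  set (d := (L1 - K * L2) / 2). assert (Hd : 0 < d) by (unfold d; lra).
  destruct (H1 d Hd) as [A1 HA1]. destruct (H2 (d / K)) as [A2 HA2]; [now apply Rdiv_lt_0_compat|].
  specialize (HA1 (Rmin A1 x0) (Rmin_l _ _)). specialize (HA2 (Rmax A2 x0) (Rmax_l _ _)).
  specialize (H _ _ (conj (Rmin_r A1 x0) (Rmax_r A2 x0))).
  apply Rabs_def2 in HA1. apply Rabs_def2 in HA2.
  assert (K * (G (Rmax A2 x0) - L2) < K * (d / K)) by (apply Rmult_lt_compat_l; lra).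
  replace (K * (d / K)) with d in H0 by (field; lra). unfold d in *. lra.
Qed.

(** * From the Lyapunov bound to the transmission probability *)

Lemma transmission_of_limit_bound k q t K W0 : 0 < k -> 0 <= q -> 0 < K ->
  W0 = k * t -> W0 = k * (1 - q) ->
  (forall eps, 0 < eps -> 2 * k * q + W0 + sqrt (2 * k * q * (2 * k * q + 2 * W0) + eps)
                          <= K * (0 + W0 + sqrt (0 * (0 + 2 * W0) + eps))) ->
  4 * K / (K + 1) ^ 2 <= t.
Proof.
  intros Hk Hq HK E1 E2 H.
  set (rho := sqrt q).
  assert (Hr : 0 <= rho) by apply sqrt_pos.
  assert (Hr2 : rho * rho = q) by (apply sqrt_sqrt; auto).
  assert (Hmain : forall eps, 0 < eps -> k * (1 + rho) ^ 2 <= K * W0 + K * sqrt eps).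
  { intros eps He. specialize (H eps He).
    replace (0 * (0 + 2 * W0) + eps) with eps in H by ring.
    replace (2 * k * q * (2 * k * q + 2 * W0) + eps) with (4 * k ^ 2 * q + eps) in H
      by (rewrite E2; ring).
    assert (sqrt (4 * k ^ 2 * q) <= sqrt (4 * k ^ 2 * q + eps)) by (apply sqrt_le_1_alt; lra).
    assert (sqrt (4 * k ^ 2 * q) = 2 * k * rho).
    { replace (4 * k ^ 2 * q) with ((2 * k * rho) ^ 2) by (rewrite <- Hr2; ring).
      apply sqrt_pow2. nra. }
    rewrite E2 in H |- *. rewrite <- Hr2 in *. nra. }
  assert (Hlim : k * (1 + rho) ^ 2 <= K * W0).
  { destruct (Rle_dec (k * (1 + rho) ^ 2) (K * W0)) as [|n]; auto. exfalso.
    set (d := k * (1 + rho) ^ 2 - K * W0). assert (Hd : 0 < d) by (unfold d; lra).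
    specialize (Hmain ((d / (2 * K)) ^ 2) ltac:(apply pow_lt; apply Rdiv_lt_0_compat; lra)).
    rewrite sqrt_pow2 in Hmain by (apply Rlt_le, Rdiv_lt_0_compat; lra).
    replace (K * (d / (2 * K))) with (d / 2) in Hmain by (field; lra). unfold d in Hmain. lra. }
  rewrite E2, <- Hr2 in Hlim.
  assert (H3 : 1 + rho <= K * (1 - rho)).
  { apply Rmult_le_reg_l with (k * (1 + rho)); [nra | nra]. }
  assert (H4 : rho <= (K - 1) / (K + 1)).
  { apply Rmult_le_reg_r with (K + 1); [lra|]. field_simplify; lra. }
  assert (Et : t = 1 - rho * rho). { rewrite Hr2. apply Rmult_eq_reg_l with k; lra. }
  rewrite Et.
  assert (rho * rho <= (K - 1) / (K + 1) * ((K - 1) / (K + 1))) by (apply Rmult_le_compat; lra).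
  replace (4 * K / (K + 1) ^ 2) with (1 - (K - 1) / (K + 1) * ((K - 1) / (K + 1)))
    by (field; lra).
  lra.
Qed.

Lemma sech_sq S : sech S ^ 2 = 4 * exp (2 * S) / (exp (2 * S) + 1) ^ 2.
Proof.
  unfold sech, cosh. replace (2 * S) with (S + S) by ring. rewrite exp_plus, exp_Ropp.
  pose proof (exp_pos S). field. split; nra.
Qed.

Lemma chi_tends_zero s (k2 : R -> R) k : (forall y, k2 y <= k ^ 2) -> tends s k2 (k ^ 2) ->
  tends s (fun y => sqrt (k ^ 2 - k2 y)) 0.
Proof.
  intros Hb H eps He. destruct (H (eps ^ 2)) as [A HA]; [nra|]. exists A. intros x Hx.
  specialize (HA x Hx). specialize (Hb x).
  rewrite Rminus_0_r, Rabs_right by (apply Rle_ge, sqrt_pos).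
  rewrite <- (sqrt_pow2 eps) by lra. apply sqrt_lt_1_alt. apply Rabs_def2 in HA. lra.
Qed.

(* The scattering problem: [u = ur + i ui] solves [u'' + (k^2 - chi^2) u = 0],
   behaves as [e^{ikx} + r e^{-ikx}] at [-oo] and as [tau e^{ikx}] at [+oo]. *)
Section Scattering.

Variables (k : R) (k2 chi ur ui vr vi : R -> R) (rr ri tr ti : R).
Hypotheses (Hk : 0 < k) (Hchi : forall y, 0 <= chi y)
  (Dur : forall y, D ur y (vr y)) (Dui : forall y, D ui y (vi y))
  (Dvr : forall y, D vr y (- k2 y * ur y)) (Dvi : forall y, D vi y (- k2 y * ui y))
  (Lk2p : tends true k2 (k ^ 2)) (Lk2m : tends false k2 (k ^ 2))
  (Lchip : tends true chi 0) (Lchim : tends false chi 0)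
  (Hm_re : tends false
     (fun x => ur x - (cos (k * x) + rr * cos (k * x) + ri * sin (k * x))) 0)
  (Hm_im : tends false
     (fun x => ui x - (sin (k * x) + ri * cos (k * x) - rr * sin (k * x))) 0)
  (Hp_re : tends true (fun x => ur x - (tr * cos (k * x) - ti * sin (k * x))) 0)
  (Hp_im : tends true (fun x => ui x - (tr * sin (k * x) + ti * cos (k * x))) 0).

Lemma free_wave_forms :
  asymp true ur (fun x => tr * cos (k * x) + - ti * sin (k * x)) /\
  asymp true ui (fun x => ti * cos (k * x) + tr * sin (k * x)) /\
  asymp false ur (fun x => (1 + rr) * cos (k * x) + ri * sin (k * x)) /\
  asymp false ui (fun x => ri * cos (k * x) + (1 - rr) * sin (k * x)).
Proof.
  unfold asymp. repeat split; eapply tends_ext;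
    [| exact Hp_re | | exact Hp_im | | exact Hm_re | | exact Hm_im]; intro; cbv beta; ring.
Qed.

Let W0 := wronskian ur ui vr vi 0.
Let q := rr ^ 2 + ri ^ 2.
Let t := tr ^ 2 + ti ^ 2.

Lemma scattering_limits :
  (forall y, wronskian ur ui vr vi y = W0) /\ W0 = k * t /\ W0 = k * (1 - q) /\
  tends true (fun y => energy k chi ur ui vr vi y - wronskian ur ui vr vi y) 0 /\
  tends false (fun y => energy k chi ur ui vr vi y - wronskian ur ui vr vi y) (2 * k * q).
Proof.
  destruct free_wave_forms as [Aurp [Auip [Aurm Auim]]].
  pose proof (derivative_asymptotics true ur vr k2 k _ _ Dur Dvr Lk2p Aurp) as Avrp.
  pose proof (derivative_asymptotics true ui vi k2 k _ _ Dui Dvi Lk2p Auip) as Avip.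
  pose proof (derivative_asymptotics false ur vr k2 k _ _ Dur Dvr Lk2m Aurm) as Avrm.
  pose proof (derivative_asymptotics false ui vi k2 k _ _ Dui Dvi Lk2m Auim) as Avim.
  assert (HW : forall y, wronskian ur ui vr vi y = W0).
  { intro y. apply constant_of_deriv_zero. intro x. apply (D_wronskian ur ui vr vi k2); auto. }
  repeat split; [exact HW | | | |].
  - apply (tends_const_unique true). apply (tends_ext _ _ _ _ HW).
    replace (k * t) with (k * (tr * tr - - ti * ti)) by (unfold t; ring).
    exact (wronskian_limit true ur ui vr vi k _ _ _ _ Aurp Auip Avrp Avip).
  - apply (tends_const_unique false). apply (tends_ext _ _ _ _ HW).
    replace (k * (1 - q)) with (k * ((1 + rr) * (1 - rr) - ri * ri)) by (unfold q; ring).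
    exact (wronskian_limit false ur ui vr vi k _ _ _ _ Aurm Auim Avrm Avim).
  - replace 0 with (k * ((- ti + ti) ^ 2 + (tr - tr) ^ 2) / 2) by field.
    now apply energy_excess_limit.
  - replace (2 * k * q) with (k * ((ri + ri) ^ 2 + (1 - rr - (1 + rr)) ^ 2) / 2)
      by (unfold q; field).
    now apply energy_excess_limit.
Qed.

Variables (M I x0 : R).
Hypotheses (Cchi : continuity chi) (Hpc : piecewise_C1 chi)
  (Ek2 : forall y, k2 y = k ^ 2 - chi y ^ 2)
  (Hup : forall x y, x <= y <= x0 -> chi x <= chi y)
  (Hdn : forall x y, x0 <= x <= y -> chi y <= chi x)
  (HM : forall y, chi y <= M) (HI : improper_integral chi I).

(* Main estimate: [t >= 4K/(K+1)^2 = sech^2 (M/k + I)] with [K = exp (2 (M/k + I))],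
   obtained by letting [a -> -oo], [b -> +oo] in the barrier bound. *)
Lemma transmission_lower_bound :
  4 * exp (2 * (M / k + I)) / (exp (2 * (M / k + I)) + 1) ^ 2 <= t.
Proof.
  destruct scattering_limits as [HW [Wp [Wm [Yp Ym]]]].
  apply (transmission_of_limit_bound k q t _ W0 Hk);
    [unfold q; nra | apply exp_pos | exact Wp | exact Wm |].
  intros eps He.
  apply (limit_comparison (lyapunov k eps chi ur ui vr vi) (lyapunov k eps chi ur ui vr vi)
           _ _ _ x0); [| | apply exp_pos |].
  - apply lyapunov_limit; auto. rewrite Wm. unfold q. nra.
  - apply lyapunov_limit; auto. lra.
  - intros a b Hab. eapply (lyapunov_barrier_bound k eps k2 chi ur ui vr vi); eauto.
Qed.

End Scattering.

Lemma barrier_profile (k2 : R -> R) k : (forall x, k2 x <= k ^ 2) ->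
  continuity (fun x => sqrt (k ^ 2 - k2 x)) ->
  (forall y, k2 y = k ^ 2 - sqrt (k ^ 2 - k2 y) ^ 2) /\ (forall y, continuity_pt k2 y).
Proof.
  intros Hb Hc.
  assert (E : forall y, k2 y = k ^ 2 - sqrt (k ^ 2 - k2 y) ^ 2).
  { intro y. rewrite <- (Rsqr_pow2 (sqrt _)), Rsqr_sqrt; [ring | specialize (Hb y); lra]. }
  split; [exact E|]. intro y.
  apply (cont_ext (fun z => k ^ 2 - sqrt (k ^ 2 - k2 z) ^ 2)); [intro; now rewrite <- E|].
  apply cont_minus; [apply cont_const | apply cont_sq, Hc].
Qed.

Theorem mainTheorem12
  (k2 : R -> R) (kinf : R)
  (hk : 0 < kinf)
  (hpc : piecewise_continuous k2)
  (hlimp : tends_to_pinf k2 (kinf ^ 2))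
  (hlimm : tends_to_minf k2 (kinf ^ 2))
  (hintp : integrable_near_pinf (fun x => k2 x - kinf ^ 2))
  (hintm : integrable_near_minf (fun x => k2 x - kinf ^ 2))
  (ur ui : R -> R) (rr ri tr ti : R)
  (hur : is_solution k2 ur) (hui : is_solution k2 ui)
  (hasm_re : tends_to_minf
     (fun x => ur x - (cos (kinf * x) + rr * cos (kinf * x) + ri * sin (kinf * x))) 0)
  (hasm_im : tends_to_minf
     (fun x => ui x - (sin (kinf * x) + ri * cos (kinf * x) - rr * sin (kinf * x))) 0)
  (hasp_re : tends_to_pinf
     (fun x => ur x - (tr * cos (kinf * x) - ti * sin (kinf * x))) 0)
  (hasp_im : tends_to_pinf
     (fun x => ui x - (tr * sin (kinf * x) + ti * cos (kinf * x))) 0)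
  (hbar : forall x, k2 x <= kinf ^ 2)
  (hchi_cont : continuity (fun x => sqrt (kinf ^ 2 - k2 x)))
  (hchi_pc1 : piecewise_C1 (fun x => sqrt (kinf ^ 2 - k2 x)))
  (hhump : exists x0 : R,
     (forall x y, x <= y <= x0 -> sqrt (kinf ^ 2 - k2 x) <= sqrt (kinf ^ 2 - k2 y)) /\
     (forall x y, x0 <= x <= y -> sqrt (kinf ^ 2 - k2 y) <= sqrt (kinf ^ 2 - k2 x)))
  (M : R)
  (hMub : forall x, sqrt (kinf ^ 2 - k2 x) <= M)
  (hMatt : exists x, sqrt (kinf ^ 2 - k2 x) = M)
  (I : R)
  (hI : improper_integral (fun x => sqrt (kinf ^ 2 - k2 x)) I) :
  transmission kinf kinf tr ti >= (sech (M / kinf + I)) ^ 2.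
Proof.
  destruct (barrier_profile k2 kinf hbar hchi_cont) as [Ek2 Ck2].
  destruct hur as [vr [Dur [_ Dvr]]]. destruct hui as [vi [Dui [_ Dvi]]].
  destruct hhump as [x0 [Hup Hdn]].
  pose proof (transmission_lower_bound kinf k2 (fun x => sqrt (kinf ^ 2 - k2 x)) ur ui vr vi
                rr ri tr ti hk (fun y => sqrt_pos _) Dur Dui
                (fun y => Dvr y (Ck2 y)) (fun y => Dvi y (Ck2 y)) hlimp hlimm
                (chi_tends_zero true k2 kinf hbar hlimp) (chi_tends_zero false k2 kinf hbar hlimm)
                hasm_re hasm_im hasp_re hasp_im M I x0 hchi_cont hchi_pc1 Ek2 Hup Hdn hMub hI)
    as Ht.
  unfold transmission. rewrite sech_sq. replace (kinf / kinf) with 1 by (field; lra). lra.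
Qed.
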